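(* Let $C_t\subseteq\mathbb{R}^d$ be closed convex sets and $\ell_t$ convex losses with subgradient selections $g_t$, each $\ell_t$ being $L$-Lipschitz. Then the iterates of lazy gradient descent with constant delay $D\ge0$ and learning rate $\eta>0$ satisfy, for every $T\ge1$, $$\Bigg\|\frac1T\sum_{t=1}^Tg_t(\theta_t)\Bigg\|_2\le\frac{\|\tilde\theta_1\|_2+\|\tilde\theta_{T+1}\|_2}{\eta T}+\frac{DL}{T}.$$
   Context: Lazy gradient descent with constant delay $D\ge0$: starting from $\tilde\theta_1$, for $t=1,2,\dots$ set $\theta_t=\Pi_{C_t}(\tilde\theta_t)$ (Euclidean projection) and $\tilde\theta_{t+1}=\tilde\theta_t-\eta g_{t-D}(\theta_{t-D})$, where $g_s(\theta_s):=\mathbf{0}$ for $s\le0$. $\ell$ is $L$-Lipschitz if all its subgradients $g$ satisfy $\|g(\theta)\|_2\le L$ for all $\theta$. *)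

From HB Require Import structures.
From mathcomp Require Import all_boot all_order all_algebra.
From mathcomp Require Import all_classical all_reals all_analysis.
Set Implicit Arguments. Unset Strict Implicit. Unset Printing Implicit Defensive.
Import Order.TTheory GRing.Theory Num.Theory.
Import numFieldNormedType.Exports.
Local Open Scope ring_scope.
Local Open Scope classical_set_scope.

Definition dotv {R : realType} {d : nat} (u v : 'rV[R]_d) : R :=
  \sum_(i < d) u ord0 i * v ord0 i.

Definition enorm {R : realType} {d : nat} (v : 'rV[R]_d) : R :=
  Num.sqrt (dotv v v).

Definition subgradient_selection {R : realType} {d : nat}
  (f : 'rV[R]_d -> R) (g : 'rV[R]_d -> 'rV[R]_d) : Prop :=
  forall x y, f x + dotv (g x) (y - x) <= f y.

(* the loss is L-Lipschitz in the paper's sense: all its subgradients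
   (here: the selection) have Euclidean norm at most L *)
Definition lipschitz_subgrad {R : realType} {d : nat}
  (g : 'rV[R]_d -> 'rV[R]_d) (L : R) : Prop :=
  forall x, enorm (g x) <= L.

Definition is_proj {R : realType} {d : nat} (C : set 'rV[R]_d) (y p : 'rV[R]_d)
  : Prop := C p /\ forall x, C x -> enorm (y - p) <= enorm (y - x).

Definition delayed_grad {R : realType} {d : nat} (D : nat)
  (g : nat -> 'rV[R]_d -> 'rV[R]_d) (theta : nat -> 'rV[R]_d) (t : nat)
  : 'rV[R]_d :=
  if (t <= D)%N then 0 else g (t - D)%N (theta (t - D)%N).

Definition lazy_gd_delayed {R : realType} {d : nat} (C : nat -> set 'rV[R]_d)
  (g : nat -> 'rV[R]_d -> 'rV[R]_d) (D : nat) (eta : R)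
  (theta thetat : nat -> 'rV[R]_d) : Prop :=
  forall t : nat, (1 <= t)%N ->
    is_proj (C t) (thetat t) (theta t) /\
    thetat t.+1 = thetat t - eta *: delayed_grad D g theta t.

(** The lazy iterate is an explicit sum: [thetat (T+1) = thetat 1 - eta * S],
    where [S] collects the gradients that have arrived by time [T], namely
    [g_t(theta_t)] for [t <= T - D].  Hence [S] has norm at most
    [(|thetat 1| + |thetat (T+1)|) / eta], and the at most [D] gradients still
    in flight add at most [D L]. *)

From HB Require Import structures.
From mathcomp Require Import all_boot all_order all_algebra.
From mathcomp Require Import all_classical all_reals all_analysis.
From mathcomp Require Import ring lra zify.
Import Order.TTheory GRing.Theory Num.Theory.
Import numFieldNormedType.Exports.
Local Open Scope ring_scope.
Local Open Scope classical_set_scope.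

Section EuclideanNorm.
Context {R : realType} {d : nat}.
Implicit Types u v : 'rV[R]_d.

Lemma dotvC u v : dotv u v = dotv v u.
Proof. by apply: eq_bigr => i _; rewrite mulrC. Qed.

Lemma dotvv_ge0 v : 0 <= dotv v v.
Proof. by apply: sumr_ge0 => i _; rewrite -expr2 sqr_ge0. Qed.

Lemma dotvv_eq0_dotv u v : dotv u u = 0 -> dotv u v = 0.
Proof.
move=> uu0; rewrite /dotv big1 // => i _.
have /eqP : u ord0 i * u ord0 i = 0.
  by apply: (psumr_eq0P _ uu0) => // j _; rewrite -expr2 sqr_ge0.
by rewrite mulf_eq0 orbb => /eqP ->; rewrite mul0r.
Qed.

Lemma dotvv_lincomb u v (x y : R) :
  dotv (x *: u + y *: v) (x *: u + y *: v) =
  x ^+ 2 * dotv u u + 2 * x * y * dotv u v + y ^+ 2 * dotv v v.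
Proof.
rewrite /dotv !mulr_sumr -!big_split /=; apply: eq_bigr => i _.
by rewrite !mxE; ring.
Qed.

Lemma enorm_ge0 v : 0 <= enorm v.
Proof. exact: sqrtr_ge0. Qed.

Lemma sqr_enorm v : enorm v ^+ 2 = dotv v v.
Proof. by rewrite sqr_sqrtr // dotvv_ge0. Qed.

Lemma enorm0 : enorm (0 : 'rV[R]_d) = 0.
Proof. by rewrite /enorm /dotv big1 ?sqrtr0 // => i _; rewrite mxE mul0r. Qed.

Lemma enormZ (x : R) v : enorm (x *: v) = `|x| * enorm v.
Proof.
have := dotvv_lincomb v v x 0; rewrite scale0r !addr0 /enorm => ->.
by rewrite expr0n /= !(mul0r, mulr0, addr0) sqrtrM ?sqr_ge0 // sqrtr_sqr.
Qed.

Lemma enormN v : enorm (- v) = enorm v.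
Proof. by rewrite -scaleN1r enormZ normrN normr1 mul1r. Qed.

Lemma cauchy_schwarz u v : dotv u v <= enorm u * enorm v.
Proof.
set a := enorm u; set b := enorm v.
have [a0|a_neq0] := eqVneq a 0.
  by rewrite dotvv_eq0_dotv ?a0 ?mul0r // -sqr_enorm -/a a0 expr0n.
have [b0|b_neq0] := eqVneq b 0.
  by rewrite dotvC dotvv_eq0_dotv ?b0 ?mulr0 // -sqr_enorm -/b b0 expr0n.
have ab_gt0 : 0 < a * b by rewrite mulr_gt0 // lt0r ?a_neq0 ?b_neq0 ?enorm_ge0.
(* [|b u - a v|^2 = 2 a b (a b - <u, v>)], with [a = |u|], [b = |v|] *)
have := dotvv_ge0 (b *: u + (- a) *: v).
rewrite dotvv_lincomb -!sqr_enorm -/a -/b => expansion_ge0.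
have : 0 <= (a * b) * (a * b - dotv u v) by nra.
by rewrite pmulr_rge0 // subr_ge0.
Qed.

Lemma ler_enormD u v : enorm (u + v) <= enorm u + enorm v.
Proof.
rewrite -(ler_pXn2r (n := 2)) ?nnegrE ?addr_ge0 ?enorm_ge0 //.
have := dotvv_lincomb u v 1 1; rewrite !scale1r => expansion.
rewrite sqr_enorm expansion sqrrD !sqr_enorm.
by have := cauchy_schwarz u v; lra.
Qed.

Lemma ler_enorm_sum m n (F : nat -> 'rV[R]_d) :
  enorm (\sum_(m <= i < n) F i) <= \sum_(m <= i < n) enorm (F i).
Proof.
elim/big_ind2: _ => [|x1 x2 y1 y2 le1 le2|//]; first by rewrite enorm0.
exact: le_trans (ler_enormD _ _) (lerD le1 le2).
Qed.

Lemma ler_enorm_sum_const m n (F : nat -> 'rV[R]_d) (L : R) :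
  (forall i, enorm (F i) <= L) ->
  enorm (\sum_(m <= i < n) F i) <= (n - m)%:R * L.
Proof.
move=> F_le; apply: le_trans (ler_enorm_sum _ _ _) _.
apply: le_trans (ler_sum_nat (G := fun=> L) _) _ => [i _|]; first exact: F_le.
by rewrite sumr_const_nat mulr_natl.
Qed.

End EuclideanNorm.

Lemma sum_delayed_grad {R : realType} {d : nat} (D : nat)
    (g : nat -> 'rV[R]_d -> 'rV[R]_d) (theta : nat -> 'rV[R]_d) (n : nat) :
  \sum_(1 <= t < n.+1) delayed_grad D g theta t =
  \sum_(1 <= t < (n - D).+1) g t (theta t).
Proof.
elim: n => [|n IH]; first by rewrite sub0n !big_geq.
rewrite big_nat_recr //= IH /delayed_grad.
case: leqP => [D_le_n|n_lt_D].
  by rewrite (_ : n.+1 - D = (n - D).+1)%N ?[RHS]big_nat_recr //; lia.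
by rewrite (_ : n.+1 - D = n - D)%N ?addr0 //; lia.
Qed.

Section LazyGradientDescent.
Context {R : realType} {d : nat}.
Context {C : nat -> set 'rV[R]_d} {g : nat -> 'rV[R]_d -> 'rV[R]_d}.
Context {D : nat} {eta : R} {theta thetat : nat -> 'rV[R]_d}.
Hypothesis lazy_gd : lazy_gd_delayed C g D eta theta thetat.

Lemma lazy_gd_unroll n :
  thetat n.+1 = thetat 1%N - eta *: \sum_(1 <= t < n.+1) delayed_grad D g theta t.
Proof.
elim: n => [|n IH]; first by rewrite big_geq // scaler0 subr0.
by rewrite (proj2 (lazy_gd n.+1 isT)) IH [in RHS]big_nat_recr //= scalerDr opprD addrA.
Qed.

Lemma lazy_gd_arrived_grads T : eta != 0 ->
  \sum_(1 <= t < (T - D).+1) g t (theta t) = eta^-1 *: (thetat 1%N - thetat T.+1).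
Proof.
move=> eta_neq0; rewrite -sum_delayed_grad [thetat T.+1]lazy_gd_unroll.
by rewrite opprB addrC subrK scalerA mulVf ?scale1r.
Qed.

End LazyGradientDescent.

Theorem proposition11 (R : realType) (d : nat)
  (C : nat -> set 'rV[R]_d) (ell : nat -> 'rV[R]_d -> R)
  (g : nat -> 'rV[R]_d -> 'rV[R]_d) (L eta : R) (D : nat)
  (theta thetat : nat -> 'rV[R]_d) :
  (forall t, closed (C t) /\ convex_set (C t)) ->
  (forall t, convex_function setT (ell t)) ->
  (forall t, subgradient_selection (ell t) (g t)) ->
  (forall t, lipschitz_subgrad (g t) L) ->
  0 < eta ->
  lazy_gd_delayed C g D eta theta thetat ->
  forall T : nat, (1 <= T)%N ->
    enorm (T%:R^-1 *: \sum_(1 <= t < T.+1) g t (theta t))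
      <= (enorm (thetat 1%N) + enorm (thetat T.+1)) / (eta * T%:R)
         + D%:R * L / T%:R.
Proof.
move=> _ _ _ g_le eta_gt0 lazy_gd T T_ge1.
have L_ge0 : 0 <= L := le_trans (enorm_ge0 _) (g_le 0%N 0).
have T_gt0 : 0 < T%:R :> R by rewrite ltr0n.
rewrite (@big_cat_nat _ _ _ (T - D).+1) //=; last by lia.
rewrite (lazy_gd_arrived_grads lazy_gd) ?gt_eqF //.
rewrite enormZ ger0_norm; last by rewrite invr_ge0 ltW.
set r := enorm (thetat 1%N) + enorm (thetat T.+1).
have -> : r / (eta * T%:R) + D%:R * L / T%:R = T%:R^-1 * (eta^-1 * r + D%:R * L).
  by field; rewrite ?gt_eqF.
apply: ler_wpM2l; first by rewrite invr_ge0 ltW.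
apply: le_trans (ler_enormD _ _) _; apply: lerD.
  rewrite enormZ ger0_norm; last by rewrite invr_ge0 ltW.
  apply: ler_wpM2l; first by rewrite invr_ge0 ltW.
  by apply: le_trans (ler_enormD _ _) _; rewrite enormN.
apply: le_trans (ler_enorm_sum_const _ _ _ _ (fun i => g_le i (theta i))) _.
by rewrite ler_wpM2r // ler_nat; lia.
Qed.
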